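(* Let $w_1,\ldots,w_n$ be positive weights, $W=\sum_{j=1}^n w_j$, $\tau=W/n$, $w'_i=\lceil w_i/\tau\rceil$ for each $i$, and $W'=\sum_{j=1}^n w'_j$. Let $T'$ be a tree with leaves $\ell_1,\ldots,\ell_n$ and let $c$ be a constant. If the depth of a leaf $\ell_i$ in $T'$ does not exceed $\log(W'/w'_i)+c$, then the depth of $\ell_i$ in $T'$ does not exceed $\min(\log(W/w_i),\log n)+c+1$.
   Context: $\log$ denotes the binary logarithm. *)

From Stdlib Require Import Reals List Permutation.
Open Scope R_scope.

Definition log2 (x : R) : R := ln x / ln 2.

(* ceiling: Int_part is the floor, so ceil x = - floor (- x) *)
Definition ceilR (x : R) : R := IZR (- Int_part (- x)).

(* finite rooted trees (arbitrary arity); leaves carry labels (leaf l_i has label i) *)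
Inductive tree : Type :=
| Leaf : nat -> tree
| Node : list tree -> tree.

Fixpoint leaves (t : tree) : list nat :=
  match t with
  | Leaf k => k :: nil
  | Node ts => (fix go (l : list tree) : list nat :=
                  match l with nil => nil | t' :: l' => leaves t' ++ go l' end) ts
  end.

(* leaf_depth t k d : the leaf labelled k occurs in t at depth d (root has depth 0) *)
Inductive leaf_depth : tree -> nat -> nat -> Prop :=
| ld_leaf : forall k, leaf_depth (Leaf k) k 0
| ld_node : forall ts t k d, In t ts -> leaf_depth t k d -> leaf_depth (Node ts) k (S d).

Fixpoint sumR (n : nat) (f : nat -> R) : R :=
  match n with O => 0 | S m => sumR m f + f m end.

(* The rounded weights w'_j = ceil(w_j / tau) satisfy w_j / tau <= w'_j < w_j / tau + 1,
   and the w_j / tau sum to n, so W' <= 2n.  Since also w'_i >= 1 and w'_i >= w_i / tau,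
   the ratio W' / w'_i is at most both 2n and 2n tau / w_i = 2 W / w_i; taking log2 turns
   the factor 2 into the additive 1. *)

From Stdlib Require Import Reals List Permutation Lra Lia.
Open Scope R_scope.

Lemma ceilR_ge x : x <= ceilR x.
Proof. unfold ceilR. rewrite opp_IZR. destruct (base_Int_part (- x)). lra. Qed.

Lemma ceilR_lt_add1 x : ceilR x < x + 1.
Proof. unfold ceilR. rewrite opp_IZR. destruct (base_Int_part (- x)). lra. Qed.

Lemma ceilR_ge1 x : 0 < x -> 1 <= ceilR x.
Proof.
  intros Hx.
  assert (Hpos : 0 < ceilR x) by (pose proof (ceilR_ge x); lra).
  unfold ceilR in *. apply lt_0_IZR in Hpos. apply IZR_le. lia.
Qed.

Lemma sumR_le n f g :
  (forall j, (j < n)%nat -> f j <= g j) -> sumR n f <= sumR n g.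
Proof.
  induction n as [|n IH]; simpl; intros Hfg; [lra|].
  assert (sumR n f <= sumR n g) by (apply IH; intros; apply Hfg; lia).
  assert (f n <= g n) by (apply Hfg; lia).
  lra.
Qed.

Lemma sumR_gt0 n f :
  (1 <= n)%nat -> (forall j, (j < n)%nat -> 0 < f j) -> 0 < sumR n f.
Proof.
  induction n as [|n IH]; intros Hn Hf; [lia|]. simpl.
  assert (0 < f n) by (apply Hf; lia).
  destruct n as [|m]; [simpl; lra|].
  assert (0 < sumR (S m) f) by (apply IH; [lia | intros; apply Hf; lia]).
  lra.
Qed.

Lemma sumR_div n f a : sumR n (fun j => f j / a) = sumR n f / a.
Proof. induction n as [|n IH]; simpl; [|rewrite IH]; unfold Rdiv; ring. Qed.

Lemma sumR_add1 n f : sumR n (fun j => f j + 1) = sumR n f + INR n.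
Proof. induction n as [|n IH]; cbn [sumR]; [simpl; ring|]. rewrite IH, S_INR. ring. Qed.

Lemma sumR_ceilR_le n f :
  sumR n (fun j => ceilR (f j)) <= sumR n f + INR n.
Proof.
  rewrite <- sumR_add1. apply sumR_le. intros j _. left. apply ceilR_lt_add1.
Qed.

Lemma ln2_gt0 : 0 < ln 2.
Proof. rewrite <- ln_1. apply ln_increasing; lra. Qed.

Lemma log2_le x y : 0 < x -> x <= y -> log2 x <= log2 y.
Proof.
  intros Hx [Hxy | ->]; [|lra].
  unfold log2, Rdiv. apply Rmult_le_compat_r.
  - left. apply Rinv_0_lt_compat, ln2_gt0.
  - left. apply ln_increasing; lra.
Qed.

Lemma log2_mul2 x : 0 < x -> log2 (2 * x) = 1 + log2 x.
Proof.
  intros Hx. pose proof ln2_gt0. unfold log2.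
  rewrite ln_mult by lra. field. lra.
Qed.

Lemma div_le_div x x' y y' :
  0 <= x <= x' -> 0 < y' <= y -> x / y <= x' / y'.
Proof.
  intros Hx Hy. unfold Rdiv. apply Rmult_le_compat; try lra.
  - left. apply Rinv_0_lt_compat. lra.
  - apply Rinv_le_contravar; lra.
Qed.

Section Rescaling.

Variables (n : nat) (w : nat -> R).
Hypothesis n_ge1 : (1 <= n)%nat.
Hypothesis w_gt0 : forall j, (j < n)%nat -> 0 < w j.

Let W := sumR n w.
Let tau := W / INR n.
Let w' := fun j => ceilR (w j / tau).

Lemma W_gt0 : 0 < W.
Proof. apply sumR_gt0; auto. Qed.

Lemma tau_gt0 : 0 < tau.
Proof. apply Rdiv_lt_0_compat; [apply W_gt0 | apply lt_0_INR; lia]. Qed.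

Lemma rescaled_ge j : (j < n)%nat -> 0 < w j / tau <= w' j.
Proof.
  intros Hj. split; [|apply ceilR_ge].
  apply Rdiv_lt_0_compat; [auto | apply tau_gt0].
Qed.

Lemma rescaled_ge1 j : (j < n)%nat -> 1 <= w' j.
Proof. intros Hj. apply ceilR_ge1, rescaled_ge, Hj. Qed.

Lemma rescaled_total_gt0 : 0 < sumR n w'.
Proof.
  apply sumR_gt0; auto. intros j Hj. pose proof (rescaled_ge1 j Hj). lra.
Qed.

Lemma rescaled_total_le : sumR n w' <= 2 * INR n.
Proof.
  assert (Hnorm : sumR n (fun j => w j / tau) = INR n).
  { pose proof W_gt0. assert (0 < INR n) by (apply lt_0_INR; lia).
    rewrite sumR_div. unfold tau. fold W. field. split; lra. }
  pose proof (sumR_ceilR_le n (fun j => w j / tau)) as Hceil.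
  unfold w'. lra.
Qed.

Lemma log2_rescaled_ratio_le_log2_n i :
  (i < n)%nat -> log2 (sumR n w' / w' i) <= 1 + log2 (INR n).
Proof.
  intros Hi. pose proof (rescaled_ge1 i Hi). pose proof rescaled_total_gt0.
  rewrite <- log2_mul2 by (apply lt_0_INR; lia).
  apply log2_le; [apply Rdiv_lt_0_compat; lra|].
  replace (2 * INR n) with (2 * INR n / 1) by field.
  apply div_le_div; [pose proof rescaled_total_le|]; lra.
Qed.

Lemma log2_rescaled_ratio_le_log2_ratio i :
  (i < n)%nat -> log2 (sumR n w' / w' i) <= 1 + log2 (W / w i).
Proof.
  intros Hi. pose proof (rescaled_ge i Hi). pose proof rescaled_total_gt0.
  pose proof W_gt0. assert (0 < w i) by auto.
  assert (0 < INR n) by (apply lt_0_INR; lia).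
  rewrite <- log2_mul2 by (apply Rdiv_lt_0_compat; lra).
  apply log2_le; [apply Rdiv_lt_0_compat; lra|].
  replace (2 * (W / w i)) with (2 * INR n / (w i / tau))
    by (unfold tau; field; repeat split; lra).
  apply div_le_div; [pose proof rescaled_total_le|]; lra.
Qed.

End Rescaling.

Theorem lemma2 (n : nat) (w : nat -> R) (T' : tree) (c : R) (i d : nat) :
  (1 <= n)%nat ->
  (forall j, (j < n)%nat -> 0 < w j) ->
  Permutation (leaves T') (seq 0 n) ->
  (i < n)%nat ->
  leaf_depth T' i d ->
  let W := sumR n w in
  let tau := W / INR n in
  let w' := fun j => ceilR (w j / tau) in
  let W' := sumR n w' in
  INR d <= log2 (W' / w' i) + c ->
  INR d <= Rmin (log2 (W / w i)) (log2 (INR n)) + c + 1.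
Proof.
  intros Hn Hw _ Hi _ W tau w' W' Hd.
  pose proof (log2_rescaled_ratio_le_log2_ratio n w Hn Hw i Hi) as Hratio.
  pose proof (log2_rescaled_ratio_le_log2_n n w Hn Hw i Hi) as Hlogn.
  assert (Hmin : INR d - c - 1 <= Rmin (log2 (W / w i)) (log2 (INR n)))
    by (apply Rmin_glb; unfold W', w', tau, W in *; lra).
  lra.
Qed.
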